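(* Let $T>0$, let $r_\alpha,r_\beta,r_v,t_v,\sigma_B,\sigma_W>0$, $\overline{v}_T\in\mathbb{R}$, $\overline{v},f_c,f_d\in C([0,T];\mathbb{R})$, and let $0\le\lambda\le r_\beta\sigma_W^2$. Consider the ODE system on $[0,T]$ $$\begin{cases} \dot\mu_t=\frac{1}{r_\alpha}\mu_t^2+\frac{1}{r_\beta}\eta_t^2-2\eta_t-r_v,\\ \dot\eta_t=\frac{1}{r_\alpha}\mu_t\eta_t+\frac{1}{r_\beta}\rho_t\eta_t-\rho_t-\frac{\lambda}{r_\beta\sigma_W^2}\eta_tf_c(t),\\ \dot\rho_t=\frac{1}{r_\alpha}\eta_t^2+\frac{1}{r_\beta}\rho_t^2-\frac{2\lambda}{r_\beta\sigma_W^2}\rho_tf_c(t)+\big(\frac{\lambda^2}{r_\beta\sigma_W^4}-\frac{\lambda}{\sigma_W^2}\big)f_c^2(t),\\ \dot\gamma_t=\frac{1}{r_\alpha}\mu_t\gamma_t+\frac{1}{r_\beta}\eta_t\theta_t-\theta_t+r_v\overline{v}(t)-\frac{\lambda}{r_\beta\sigma_W^2}\eta_tf_d(t),\\ \dot\theta_t=\frac{1}{r_\alpha}\eta_t\gamma_t+\frac{1}{r_\beta}\rho_t\theta_t-\frac{\lambda}{r_\beta\sigma_W^2}\theta_tf_c(t)-\frac{\lambda}{r_\beta\sigma_W^2}f_d(t)\rho_t+\big(\frac{\lambda^2}{r_\beta\sigma_W^4}-\frac{\lambda}{\sigma_W^2}\big)f_c(t)f_d(t),\\ \dot\xi_t=\frac{1}{2r_\alpha}\gamma_t^2+\frac{1}{2r_\beta}\theta_t^2-\frac12\sigma_B^2\mu_t-\frac12\sigma_W^2\rho_t-\frac{\lambda}{r_\beta\sigma_W^2}f_d(t)\theta_t-\frac{r_v\overline{v}(t)^2}{2}+\big(\frac{\lambda^2}{2r_\beta\sigma_W^4}-\frac{\lambda}{2\sigma_W^2}\big)f_d^2(t),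 \end{cases}$$ with terminal conditions $\mu_T=t_v$, $\eta_T=0$, $\rho_T=0$, $\gamma_T=-t_v\overline{v}_T$, $\theta_T=0$, $\xi_T=\frac{t_v}{2}\overline{v}_T^2$. Suppose $f_c\equiv f_d\equiv0$ or $\lambda=0$. Then the unique solution $(\mu,\eta,\rho,\gamma,\theta,\xi)$ of this system on $[0,T]$ satisfies $\eta\equiv\rho\equiv\theta\equiv0$, and consequently the feedback function $$\hat\beta(t,v,y)=-\frac{\eta_t}{r_\beta}v+\Big(\frac{\lambda}{r_\beta\sigma_W^2}f_c(t)-\frac{\rho_t}{r_\beta}\Big)y+\Big(\frac{\lambda}{r_\beta\sigma_W^2}f_d(t)-\frac{\theta_t}{r_\beta}\Big)$$ satisfies $\hat\beta\equiv0$ on $[0,T]\times\mathbb{R}\times\mathbb{R}$.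
   Context: It is a known fact (which may be assumed) that under the condition $0\le\lambda\le r_\beta\sigma_W^2$ this terminal-value ODE system has a unique global solution on $[0,T]$ for every $T>0$. The system arises from a quadratic ansatz $\mathcal{V}(t,v,y)=\frac{\mu_t}{2}v^2+\eta_tvy+\frac{\rho_t}{2}y^2+\gamma_tv+\theta_ty+\xi_t$ for the value function of a linear-quadratic control problem, and $\hat\beta$ is the resulting optimal feedback for the control $\beta$. *)

From Stdlib Require Import Reals.
From Coquelicot Require Import Coquelicot.
Open Scope R_scope.

Definition cont_on_0T (T : R) (f : R -> R) : Prop :=
  forall t, 0 <= t <= T ->
    filterlim f (within (fun x => 0 <= x <= T) (locally t)) (locally (f t)).

Definition beta_hat (r_beta sigma_W lambda : R) (fc fd eta rho theta : R -> R)
  (t v y : R) : R :=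
  - (eta t / r_beta) * v
  + (lambda / (r_beta * sigma_W ^ 2) * fc t - rho t / r_beta) * y
  + (lambda / (r_beta * sigma_W ^ 2) * fd t - theta t / r_beta).

(* If lambda f_c = lambda f_d = 0, the equations for (eta, rho, theta) are
   homogeneous in these unknowns, with mu and gamma entering only as bounded
   coefficients, and their terminal data vanish.  The energy
   E = eta^2 + rho^2 + theta^2 then satisfies E' >= -C E on [0,T], so E e^(Ct)
   is nondecreasing; it vanishes at T and is nonnegative, hence E = 0 on [0,T]. *)
From Stdlib Require Import Reals Lra.
From Coquelicot Require Import Coquelicot.
Open Scope R_scope.

Section ContinuityOnInterval.

Variable T : R.

Lemma cont_on_0T_of_continuous (f : R -> R) :
  (forall t, continuous f t) -> cont_on_0T T f.
Proof.
  intros Hf t _.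
  eapply filterlim_filter_le_1; [apply filter_le_within | apply Hf].
Qed.

Lemma cont_on_0T_plus (f g : R -> R) :
  cont_on_0T T f -> cont_on_0T T g -> cont_on_0T T (fun t => f t + g t).
Proof.
  intros Hf Hg t Ht.
  apply (filterlim_comp_2 (F := within _ (locally t)) f g Rplus (Hf t Ht) (Hg t Ht)).
  apply (filterlim_plus (V := R_NormedModule)).
Qed.

Lemma cont_on_0T_mult (f g : R -> R) :
  cont_on_0T T f -> cont_on_0T T g -> cont_on_0T T (fun t => f t * g t).
Proof.
  intros Hf Hg t Ht.
  apply (filterlim_comp_2 (F := within _ (locally t)) f g Rmult (Hf t Ht) (Hg t Ht)).
  apply (filterlim_mult (K := R_AbsRing)).
Qed.

Lemma cont_on_0T_pow (f : R -> R) (n : nat) :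
  cont_on_0T T f -> cont_on_0T T (fun t => f t ^ n).
Proof.
  intros Hf; induction n as [|n IH]; simpl.
  - intros t _; apply filterlim_const.
  - exact (cont_on_0T_mult f _ Hf IH).
Qed.

End ContinuityOnInterval.

Section BackwardGronwall.

Variable T : R.
Hypothesis T_ge0 : 0 <= T.

(* Extends a function given on [0,T] to a continuous one on R, so that the
   two-sided [continuity_pt] needed by MVT_gen holds at the endpoints. *)
Definition clamp (x : R) : R := Rmax 0 (Rmin T x).

Lemma clamp_in (x : R) : 0 <= clamp x <= T.
Proof. unfold clamp, Rmax, Rmin; repeat destruct Rle_dec; lra. Qed.

Lemma clamp_id (x : R) : 0 <= x <= T -> clamp x = x.
Proof. intros Hx; unfold clamp, Rmax, Rmin; repeat destruct Rle_dec; lra. Qed.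

Lemma clamp_1_lipschitz (x y : R) : Rabs (clamp y - clamp x) <= Rabs (y - x).
Proof.
  unfold clamp, Rmax, Rmin.
  repeat destruct Rle_dec; unfold Rabs; repeat destruct Rcase_abs; lra.
Qed.

Lemma continuity_pt_comp_clamp (f : R -> R) (x : R) :
  cont_on_0T T f -> continuity_pt (fun y => f (clamp y)) x.
Proof.
  intros Hf; apply continuity_pt_filterlim.
  eapply filterlim_comp; [| apply Hf, clamp_in].
  intros P [eps He]; exists eps; intros y Hy.
  apply He; [| apply clamp_in].
  eapply Rle_lt_trans; [apply clamp_1_lipschitz | exact Hy].
Qed.

Lemma is_derive_comp_clamp (f : R -> R) (t l : R) :
  0 < t < T -> is_derive f t l -> is_derive (fun x => f (clamp x)) t l.
Proof.
  intros Ht Hd; eapply is_derive_ext_loc; [| exact Hd].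
  assert (Hdist : 0 < Rmin t (T - t)) by (apply Rmin_pos; lra).
  exists (mkposreal _ Hdist); intros y Hy.
  apply Rabs_lt_between in Hy; simpl in Hy.
  pose proof (Rmin_l t (T - t)); pose proof (Rmin_r t (T - t)).
  rewrite clamp_id; [reflexivity | unfold minus, plus, opp in Hy; simpl in Hy; lra].
Qed.

Lemma cont_on_0T_bounded (f : R -> R) :
  cont_on_0T T f -> exists M, forall t, 0 <= t <= T -> Rabs (f t) <= M.
Proof.
  intros Hf.
  destruct (continuity_ab_maj (fun y => Rabs (f (clamp y))) 0 T T_ge0) as [x [Hmax _]].
  { intros c _; apply (continuity_pt_comp (fun y => f (clamp y)) Rabs).
    - now apply continuity_pt_comp_clamp.
    - apply Rcontinuity_abs. }
  exists (Rabs (f (clamp x))); intros t Ht.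
  specialize (Hmax t Ht); simpl in Hmax; now rewrite clamp_id in Hmax.
Qed.

Lemma le_terminal_of_derive_nonneg (f df : R -> R) :
  cont_on_0T T f ->
  (forall t, 0 < t < T -> is_derive f t (df t)) ->
  (forall t, 0 < t < T -> 0 <= df t) ->
  forall t, 0 <= t <= T -> f t <= f T.
Proof.
  intros Hf Hd Hpos t Ht.
  (* MVT_gen may return an endpoint, where [df] says nothing; [Rmax 0 df]
     agrees with [df] inside and is nonnegative everywhere. *)
  destruct (MVT_gen (fun x => f (clamp x)) t T (fun x => Rmax 0 (df x)))
    as [c [_ Hmvt]].
  - intros x Hx; rewrite Rmin_left, Rmax_right in Hx by lra.
    rewrite Rmax_right by (apply Hpos; lra).
    apply is_derive_comp_clamp, Hd; lra.
  - intros x _; now apply continuity_pt_comp_clamp.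
  - rewrite !clamp_id in Hmvt by lra.
    assert (0 <= Rmax 0 (df c) * (T - t))
      by (apply Rmult_le_pos; [apply Rmax_l | lra]).
    lra.
Qed.

Lemma gronwall_backward_nonpos (C : R) (E dE : R -> R) :
  cont_on_0T T E ->
  (forall t, 0 < t < T -> is_derive E t (dE t)) ->
  (forall t, 0 < t < T -> 0 <= dE t + C * E t) ->
  E T <= 0 ->
  forall t, 0 <= t <= T -> E t <= 0.
Proof.
  intros HE Hd Hineq HET t Ht.
  assert (Hmono : E t * exp (C * t) <= E T * exp (C * T)).
  { apply (le_terminal_of_derive_nonneg (fun s => E s * exp (C * s))
             (fun s => exp (C * s) * (dE s + C * E s))).
    - apply cont_on_0T_mult; [exact HE |].
      apply cont_on_0T_of_continuous; intros s.
      apply (ex_derive_continuous (V := R_NormedModule) (fun x => exp (C * x))).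
      auto_derive; exact I.
    - intros s Hs.
      assert (Dexp : is_derive (fun x => exp (C * x)) s (C * exp (C * s)))
        by (auto_derive; [exact I | ring]).
      pose proof (is_derive_mult _ _ _ _ _ (Hd s Hs) Dexp Rmult_comm) as D.
      unfold mult, plus in D; simpl in D.
      replace (exp (C * s) * (dE s + C * E s))
        with (dE s * exp (C * s) + E s * (C * exp (C * s))) by ring.
      exact D.
    - intros s Hs; apply Rmult_le_pos; [apply Rlt_le, exp_pos | now apply Hineq].
    - exact Ht. }
  pose proof (exp_pos (C * t)); pose proof (exp_pos (C * T)); nra.
Qed.

End BackwardGronwall.

(* Each cubic term is controlled by the bounds on m, g, r, and -2ar by a^2 + r^2. *)
Lemma riccati_energy_lower_bound (A B Mm Mg Mr m g a r h : R) :
  0 <= A -> 0 <= B -> Rabs m <= Mm -> Rabs g <= Mg -> Rabs r <= Mr ->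
  0 <= 2 * a * (A * m * a + B * r * a - r) + 2 * r * (A * a ^ 2 + B * r ^ 2)
       + 2 * h * (A * a * g + B * r * h)
       + (1 + 2 * A * (Mm + Mr) + A * Mg + 2 * B * Mr) * (a ^ 2 + r ^ 2 + h ^ 2).
Proof.
  intros HA HB Hm Hg Hr.
  apply Rabs_le_between in Hm; apply Rabs_le_between in Hg; apply Rabs_le_between in Hr.
  assert (0 <= Mm /\ 0 <= Mg /\ 0 <= Mr) as (HMm & HMg & HMr) by lra.
  assert (0 <= A * ((m + Mm) * a ^ 2)) by (apply Rmult_le_pos; nra).
  assert (0 <= A * ((r + Mr) * a ^ 2)) by (apply Rmult_le_pos; nra).
  assert (0 <= B * ((r + Mr) * (a ^ 2 + r ^ 2 + h ^ 2))) by (apply Rmult_le_pos; nra).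
  assert (0 <= A * ((g + Mg) * (a + h) ^ 2 + (Mg - g) * (a - h) ^ 2)).
  { apply Rmult_le_pos; [lra |].
    apply Rplus_le_le_0_compat; apply Rmult_le_pos; lra || apply pow2_ge_0. }
  assert (0 <= (a - r) ^ 2) by apply pow2_ge_0.
  assert (0 <= A * (2 * (Mm + Mr) + Mg) * r ^ 2) by (apply Rmult_le_pos; nra).
  assert (0 <= (1 + 2 * A * (Mm + Mr)) * h ^ 2) by (apply Rmult_le_pos; nra).
  lra.
Qed.

Lemma is_derive_sqr (f : R -> R) (x l : R) :
  is_derive f x l -> is_derive (fun y => f y ^ 2) x (2 * f x * l).
Proof.
  intros Hf; pose proof (is_derive_pow f 2 x l Hf) as D; simpl in D.
  replace (2 * f x * l) with ((1 + 1) * l * (f x * 1)) by ring; exact D.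
Qed.

Lemma decoupled_riccati_terminal_zero (T A B : R) (m g a r h : R -> R) :
  0 <= T -> 0 <= A -> 0 <= B ->
  cont_on_0T T m -> cont_on_0T T g ->
  cont_on_0T T a -> cont_on_0T T r -> cont_on_0T T h ->
  (forall t, 0 < t < T -> is_derive a t (A * m t * a t + B * r t * a t - r t)) ->
  (forall t, 0 < t < T -> is_derive r t (A * a t ^ 2 + B * r t ^ 2)) ->
  (forall t, 0 < t < T -> is_derive h t (A * a t * g t + B * r t * h t)) ->
  a T = 0 -> r T = 0 -> h T = 0 ->
  forall t, 0 <= t <= T -> a t = 0 /\ r t = 0 /\ h t = 0.
Proof.
  intros HT HA HB cm cg ca cr ch da dr dh aT rT hT.
  destruct (cont_on_0T_bounded T HT m cm) as [Mm Bm].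
  destruct (cont_on_0T_bounded T HT g cg) as [Mg Bg].
  destruct (cont_on_0T_bounded T HT r cr) as [Mr Br].
  assert (Henergy : forall t, 0 <= t <= T -> a t ^ 2 + r t ^ 2 + h t ^ 2 <= 0).
  { apply (gronwall_backward_nonpos T HT (1 + 2 * A * (Mm + Mr) + A * Mg + 2 * B * Mr)
      (fun t => a t ^ 2 + r t ^ 2 + h t ^ 2)
      (fun t => 2 * a t * (A * m t * a t + B * r t * a t - r t)
                + 2 * r t * (A * a t ^ 2 + B * r t ^ 2)
                + 2 * h t * (A * a t * g t + B * r t * h t))).
    - repeat apply cont_on_0T_plus; now apply cont_on_0T_pow.
    - intros t Ht.
      apply (is_derive_plus (V := R_NormedModule));
        [apply (is_derive_plus (V := R_NormedModule)) |]; apply is_derive_sqr; auto.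
    - intros t Ht.
      apply riccati_energy_lower_bound; auto; [apply Bm | apply Bg | apply Br]; lra.
    - rewrite aT, rT, hT; lra. }
  intros t Ht; specialize (Henergy t Ht).
  pose proof (pow2_ge_0 (a t)); pose proof (pow2_ge_0 (r t)); pose proof (pow2_ge_0 (h t)).
  repeat split; nra.
Qed.

Theorem corollary1
  (T r_alpha r_beta r_v t_v sigma_B sigma_W vbarT lambda : R)
  (vbar fc fd : R -> R)
  (mu eta rho gamma theta xi : R -> R) :
  0 < T -> 0 < r_alpha -> 0 < r_beta -> 0 < r_v -> 0 < t_v ->
  0 < sigma_B -> 0 < sigma_W ->
  cont_on_0T T vbar -> cont_on_0T T fc -> cont_on_0T T fd ->
  0 <= lambda <= r_beta * sigma_W ^ 2 ->
  (* (mu, eta, rho, gamma, theta, xi) is a solution of the ODE system on [0,T]: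
     continuous on [0,T], differentiable on (0,T) with the given derivatives *)
  cont_on_0T T mu -> cont_on_0T T eta -> cont_on_0T T rho ->
  cont_on_0T T gamma -> cont_on_0T T theta -> cont_on_0T T xi ->
  (forall t, 0 < t < T ->
     is_derive mu t
       (/ r_alpha * mu t ^ 2 + / r_beta * eta t ^ 2 - 2 * eta t - r_v)) ->
  (forall t, 0 < t < T ->
     is_derive eta t
       (/ r_alpha * mu t * eta t + / r_beta * rho t * eta t - rho t
        - lambda / (r_beta * sigma_W ^ 2) * eta t * fc t)) ->
  (forall t, 0 < t < T ->
     is_derive rho t
       (/ r_alpha * eta t ^ 2 + / r_beta * rho t ^ 2
        - 2 * lambda / (r_beta * sigma_W ^ 2) * rho t * fc t
        + (lambda ^ 2 / (r_beta * sigma_W ^ 4) - lambda / sigma_W ^ 2) * fc t ^ 2)) ->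
  (forall t, 0 < t < T ->
     is_derive gamma t
       (/ r_alpha * mu t * gamma t + / r_beta * eta t * theta t - theta t
        + r_v * vbar t - lambda / (r_beta * sigma_W ^ 2) * eta t * fd t)) ->
  (forall t, 0 < t < T ->
     is_derive theta t
       (/ r_alpha * eta t * gamma t + / r_beta * rho t * theta t
        - lambda / (r_beta * sigma_W ^ 2) * theta t * fc t
        - lambda / (r_beta * sigma_W ^ 2) * fd t * rho t
        + (lambda ^ 2 / (r_beta * sigma_W ^ 4) - lambda / sigma_W ^ 2)
          * fc t * fd t)) ->
  (forall t, 0 < t < T ->
     is_derive xi t
       (/ (2 * r_alpha) * gamma t ^ 2 + / (2 * r_beta) * theta t ^ 2
        - / 2 * sigma_B ^ 2 * mu t - / 2 * sigma_W ^ 2 * rho t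
        - lambda / (r_beta * sigma_W ^ 2) * fd t * theta t
        - r_v * vbar t ^ 2 / 2
        + (lambda ^ 2 / (2 * r_beta * sigma_W ^ 4) - lambda / (2 * sigma_W ^ 2))
          * fd t ^ 2)) ->
  mu T = t_v -> eta T = 0 -> rho T = 0 ->
  gamma T = - t_v * vbarT -> theta T = 0 -> xi T = t_v / 2 * vbarT ^ 2 ->
  ((forall t, 0 <= t <= T -> fc t = 0 /\ fd t = 0) \/ lambda = 0) ->
  (forall t, 0 <= t <= T -> eta t = 0 /\ rho t = 0 /\ theta t = 0) /\
  (forall t v y, 0 <= t <= T ->
     beta_hat r_beta sigma_W lambda fc fd eta rho theta t v y = 0).
Proof.
  intros HT Hra Hrb _ _ _ _ _ _ _ _ cmu ceta crho cgamma ctheta _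
    _ deta drho _ dtheta _ _ etaT rhoT _ thetaT _ Hcase.
  assert (Hcase_at : forall t, 0 <= t <= T -> (fc t = 0 /\ fd t = 0) \/ lambda = 0).
  { intros t Ht; destruct Hcase as [Hf | Hl]; [left; now apply Hf | now right]. }
  assert (Hzero : forall t, 0 <= t <= T -> eta t = 0 /\ rho t = 0 /\ theta t = 0).
  { apply (decoupled_riccati_terminal_zero T (/ r_alpha) (/ r_beta) mu gamma eta rho theta).
    all: try assumption.
    1: lra.
    1, 2: apply Rlt_le, Rinv_0_lt_compat; assumption.
    1: intros t Ht; refine (@eq_ind R _ (is_derive eta t) (deta t Ht) _ _).
    2: intros t Ht; refine (@eq_ind R _ (is_derive rho t) (drho t Ht) _ _).
    3: intros t Ht; refine (@eq_ind R _ (is_derive theta t) (dtheta t Ht) _ _).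
    all: destruct (Hcase_at t) as [[Hfc Hfd] | ->]; [lra | rewrite Hfc, ?Hfd |].
    all: unfold Rdiv; ring. }
  split; [exact Hzero |].
  intros t v y Ht; unfold beta_hat.
  destruct (Hzero t Ht) as (-> & -> & ->).
  destruct (Hcase_at t Ht) as [[-> ->] | ->]; unfold Rdiv; ring.
Qed.
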